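(* Let $U,V\in\mathbb{R}^{n\times r}$ each have orthonormal columns, and let $\Gamma\in\mathbb{R}^r$ be the vector of principal angles between $\operatorname{range}U$ and $\operatorname{range}V$, i.e. $\cos(\Gamma)$ is the vector of singular values of $U^TV$. Then for every $Z\in\mathcal{S}^r_+$, $$\operatorname{dist}(VZV^T;\,U\mathcal{S}^r_+U^T)\le\sqrt2\,\|Z\|_F\,\|\sin(\Gamma)\|_2,$$ where $\sin(\Gamma)$ is taken entrywise.
   Context: $\mathcal{S}^r_+$ is the cone of real symmetric PSD $r\times r$ matrices; $U\mathcal{S}^r_+U^T=\{UWU^T:W\in\mathcal{S}^r_+\}$; $\operatorname{dist}(X;\mathcal{Q})=\inf_{Y\in\mathcal{Q}}\|X-Y\|_F$ with $\|\cdot\|_F$ the Frobenius norm. *)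

(* Real numbers are modelled by an arbitrary real closed
   field R : rcfType (the reals are one; the statement is purely algebraic). *)
From HB Require Import structures.
From mathcomp Require Import all_boot all_order all_algebra.
Set Implicit Arguments. Unset Strict Implicit. Unset Printing Implicit Defensive.
Import Order.TTheory GRing.Theory Num.Theory.
Local Open Scope ring_scope.

Definition frob (R : rcfType) (m n : nat) (A : 'M[R]_(m, n)) : R :=
  Num.sqrt (\sum_(i < m) \sum_(j < n) A i j ^+ 2).

Definition norm2 (R : rcfType) (r : nat) (v : 'rV[R]_r) : R :=
  Num.sqrt (\sum_(j < r) v 0 j ^+ 2).

Definition psd (R : rcfType) (r : nat) (W : 'M[R]_r) : Prop :=
  W^T = W /\ forall x : 'cV[R]_r, 0 <= (x^T *m W *m x) 0 0.

Definition orthonormal_cols (R : rcfType) (n r : nat) (A : 'M[R]_(n, r)) : Prop :=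
  A^T *m A = 1%:M.

Definition orth_mx (R : rcfType) (r : nat) (P : 'M[R]_r) : Prop :=
  P^T *m P = 1%:M.

Definition conj_psd_cone (R : rcfType) (n r : nat) (U : 'M[R]_(n, r))
  (Y : 'M[R]_n) : Prop :=
  exists W : 'M[R]_r, psd W /\ Y = U *m W *m U^T.

(* dist(X; Q) <= c, i.e. inf_{Y in Q} ||X - Y||_F <= c, unfolded:
   for every eps > 0 some Y in Q has ||X - Y||_F <= c + eps. *)
Definition dist_le (R : rcfType) (n : nat) (X : 'M[R]_n)
  (Q : 'M[R]_n -> Prop) (c : R) : Prop :=
  forall eps : R, 0 < eps -> exists Y, Q Y /\ frob (X - Y) <= c + eps.

(* sin of a principal angle gamma in [0, pi/2] given its cosine c = cos gamma
   in [0,1]: sin(gamma) = sqrt(1 - c^2). *)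
Definition sin_of_cos (R : rcfType) (c : R) : R := Num.sqrt (1 - c ^+ 2).

Definition sinGamma (R : rcfType) (r : nat) (s : 'rV[R]_r) : 'rV[R]_r :=
  \row_j sin_of_cos (s 0 j).

From HB Require Import structures.
From mathcomp Require Import all_boot all_order all_algebra.
From mathcomp Require Import lra.
Set Implicit Arguments. Unset Strict Implicit. Unset Printing Implicit Defensive.
Import Order.TTheory GRing.Theory Num.Theory.
Local Open Scope ring_scope.

(** The compression Y = Pi X Pi of X = V Z V^T by the orthogonal projector
    Pi = U U^T onto range U lies in the cone U S^r_+ U^T, so it suffices to
    bound ||X - Pi X Pi||_F. For a symmetric X one has
    ||X - Pi X Pi||_F^2 <= 2 tr(X (I - Pi) X), the slack being
    ||(I - Pi) X (I - Pi)||_F^2. With the SVD U^T V = P diag(s) Q^T,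
    tr(X (I - Pi) X) = sum_j (1 - s_j^2) ((Q^T Z)(Q^T Z)^T)_jj, and each
    diagonal entry is at most ||Q^T Z||_F^2 = ||Z||_F^2. *)

Section TraceInequalities.
Variable R : realFieldType.

Lemma mxtrace_mul_trmx m k (A : 'M[R]_(m, k)) :
  \tr (A *m A^T) = \sum_i \sum_j A i j ^+ 2.
Proof.
apply: eq_bigr => i _; rewrite mxE; apply: eq_bigr => j _.
by rewrite mxE expr2.
Qed.

Lemma mul_trmx_diag_ge0 m k (A : 'M[R]_(m, k)) i : 0 <= (A *m A^T) i i.
Proof. by rewrite mxE; apply: sumr_ge0 => j _; rewrite mxE -expr2 sqr_ge0. Qed.

Lemma mxtrace_mul_trmx_ge0 m k (A : 'M[R]_(m, k)) : 0 <= \tr (A *m A^T).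
Proof. by apply: sumr_ge0 => i _; apply: mul_trmx_diag_ge0. Qed.

Lemma mul_trmx_diag_le_mxtrace m k (A : 'M[R]_(m, k)) i :
  (A *m A^T) i i <= \tr (A *m A^T).
Proof.
rewrite /mxtrace (bigD1 i) //= lerDl.
by apply: sumr_ge0 => j _; apply: mul_trmx_diag_ge0.
Qed.

Lemma weighted_diag_le_mxtrace m k (w : 'I_m -> R) (A : 'M[R]_(m, k)) :
  (forall i, 0 <= w i) ->
  \sum_i w i * (A *m A^T) i i <= (\sum_i w i) * \tr (A *m A^T).
Proof.
move=> w_ge0; rewrite mulr_suml; apply: ler_sum => i _.
by rewrite ler_wpM2l // mul_trmx_diag_le_mxtrace.
Qed.

Lemma mxtrace_diag_mulmx k (d : 'rV[R]_k) (A : 'M[R]_k) :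
  \tr (diag_mx d *m A) = \sum_i d 0 i * A i i.
Proof. by rewrite mul_diag_mx; apply: eq_bigr => i _; rewrite mxE. Qed.

Lemma mxtrace_sub_compress_le n (X P : 'M[R]_n) :
  X^T = X -> P^T = P -> P *m P = P ->
  \tr ((X - P *m X *m P) *m (X - P *m X *m P)^T)
    <= 2 * \tr (X *m (1%:M - P) *m X).
Proof.
move=> sym_X sym_P idem_P.
set C := 1%:M - P.
have sym_C : C^T = C by rewrite /C linearB /= trmx1 sym_P.
have idem_C : C *m C = C.
  by rewrite /C mulmxBr mulmx1 mulmxBl mul1mx idem_P subrr subr0.
have sym_G : (C *m X *m C)^T = C *m X *m C.
  by rewrite !trmx_mul sym_C sym_X mulmxA.
have slack_ge0 := mxtrace_mul_trmx_ge0 (C *m X *m C).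
rewrite sym_G in slack_ge0.
set a := \tr (X *m X); set b := \tr (X *m X *m P).
set c := \tr (X *m P *m X *m P).
have trE : \tr ((X - P *m X *m P) *m (X - P *m X *m P)^T) = a - c.
  have trPXPX : \tr (P *m X *m P *m X) = c.
    by rewrite -!mulmxA mxtrace_mulC !mulmxA.
  have trPXPPXP : \tr (P *m X *m P *m P *m X *m P) = c.
    rewrite -(mulmxA (P *m X)) idem_P -mulmxA mxtrace_mulC !mulmxA.
    by rewrite -(mulmxA X P P) idem_P.
  rewrite linearB /= !trmx_mul sym_X sym_P !mulmxA.
  rewrite mulmxBl !mulmxBr !raddfB /= !mulmxA trPXPX trPXPPXP -/a -/c; lra.
have trXCX : \tr (X *m C *m X) = a - b.
  rewrite /C mulmxBr mulmx1 mulmxBl raddfB /=.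
  by rewrite [\tr (X *m P *m X)]mxtrace_mulC mulmxA.
have trG : \tr (C *m X *m C *m (C *m X *m C)) = a - 2 * b + c.
  rewrite !mulmxA -(mulmxA (C *m X) C C) idem_C -mulmxA mxtrace_mulC !mulmxA.
  rewrite -(mulmxA X C C) idem_C /C !mulmxBr !mulmx1 !mulmxBl !raddfB /=.
  by rewrite [\tr (X *m P *m X)]mxtrace_mulC mulmxA -/a -/b -/c; lra.
by rewrite trE trXCX; rewrite trG in slack_ge0; lra.
Qed.

End TraceInequalities.

Section FrobeniusAndCone.
Variable R : rcfType.

Lemma frobE m k (A : 'M[R]_(m, k)) : frob A = Num.sqrt (\tr (A *m A^T)).
Proof. by rewrite mxtrace_mul_trmx. Qed.

Lemma psd_conjmx m k (B : 'M[R]_(m, k)) (W : 'M[R]_m) :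
  psd W -> psd (B^T *m W *m B).
Proof.
case=> sym_W W_ge0; split; first by rewrite !trmx_mul trmxK sym_W mulmxA.
by move=> x; have := W_ge0 (B *m x); rewrite !trmx_mul !mulmxA.
Qed.

Lemma dist_le_of_mem n (X Y : 'M[R]_n) (S : 'M[R]_n -> Prop) c :
  S Y -> frob (X - Y) <= c -> dist_le X S c.
Proof. by move=> SY le_c eps eps_gt0; exists Y; split => //; lra. Qed.

Lemma one_sub_sqr_le_sin_of_cos (c : R) : 1 - c ^+ 2 <= sin_of_cos c ^+ 2.
Proof.
rewrite /sin_of_cos; case: (lerP 0 (1 - c ^+ 2)) => [/sqr_sqrtr -> //|lt0].
by rewrite ler0_sqrtr ?expr0n ?ltW.
Qed.

Lemma mxtrace_orth_mul_trmx k m (Q : 'M[R]_k) (Z : 'M[R]_(k, m)) :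
  orth_mx Q -> \tr (Q^T *m Z *m (Q^T *m Z)^T) = \tr (Z *m Z^T).
Proof.
move=> /mulmx1C orth_Q; rewrite trmx_mul trmxK !mulmxA mxtrace_mulC !mulmxA.
by rewrite orth_Q mul1mx.
Qed.

Lemma mxtrace_conj_orth_diag k (Q Z : 'M[R]_k) (d : 'rV[R]_k) :
  orth_mx Q ->
  \tr (Z^T *m (1%:M - Q *m diag_mx d *m Q^T) *m Z)
    = \sum_i (1 - d 0 i) * ((Q^T *m Z) *m (Q^T *m Z)^T) i i.
Proof.
move=> orth_Q; set M := Q^T *m Z.
have trDM : \tr (Z^T *m (Q *m diag_mx d *m Q^T) *m Z)
             = \tr (diag_mx d *m (M *m M^T)).
  rewrite /M trmx_mul trmxK !mulmxA -!(mulmxA (Z^T *m Q)).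
  by rewrite [LHS]mxtrace_mulC !mulmxA.
rewrite mulmxBr mulmx1 mulmxBl raddfB /= mxtrace_mulC.
rewrite -(mxtrace_orth_mul_trmx _ orth_Q).
rewrite trDM mxtrace_diag_mulmx {1}/mxtrace -sumrB.
by apply: eq_bigr => i _; rewrite mulrBl mul1r.
Qed.
End FrobeniusAndCone.


Section PrincipalAngles.
Variables (R : rcfType) (n r : nat) (U V : 'M[R]_(n, r)).
Variables (s : 'rV[R]_r) (P Q : 'M[R]_r).
Hypotheses (orthV : orthonormal_cols V) (orthP : orth_mx P) (orthQ : orth_mx Q).
Hypothesis svd_UtV : U^T *m V = P *m diag_mx s *m Q^T.

Let s2 : 'rV[R]_r := \row_j s 0 j ^+ 2.

Lemma residual_gram :
  V^T *m (1%:M - U *m U^T) *m V = 1%:M - Q *m diag_mx s2 *m Q^T.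
Proof.
rewrite mulmxBr mulmx1 mulmxBl orthV; congr (_ - _).
have -> : V^T *m (U *m U^T) *m V = (U^T *m V)^T *m (U^T *m V).
  by rewrite trmx_mul trmxK !mulmxA.
rewrite svd_UtV !trmx_mul trmxK tr_diag_mx !mulmxA -(mulmxA _ P^T P) orthP.
rewrite mulmx1.
congr (_ *m _); rewrite -mulmxA mul_diag_mx; congr (_ *m _).
by apply/matrixP => i j; rewrite !mxE mulrnAr expr2.
Qed.

Lemma mxtrace_residual_le (Z : 'M[R]_r) : Z^T = Z ->
  \tr (V *m Z *m V^T *m (1%:M - U *m U^T) *m (V *m Z *m V^T))
    <= \tr (Z *m Z^T) * \sum_j sin_of_cos (s 0 j) ^+ 2.
Proof.
move=> sym_Z; set M := Q^T *m Z.
have -> : \tr (V *m Z *m V^T *m (1%:M - U *m U^T) *m (V *m Z *m V^T))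
        = \tr (Z^T *m (1%:M - Q *m diag_mx s2 *m Q^T) *m Z).
  rewrite -residual_gram sym_Z !mulmxA -!mulmxA mxtrace_mulC !mulmxA.
  by rewrite -(mulmxA _ V^T V) orthV mulmx1.
rewrite mxtrace_conj_orth_diag // -(mxtrace_orth_mul_trmx _ orthQ) -/M mulrC.
apply: le_trans (weighted_diag_le_mxtrace M _); last by move=> j; exact: sqr_ge0.
apply: ler_sum => j _; rewrite mxE.
by rewrite ler_wpM2r ?mul_trmx_diag_ge0 ?one_sub_sqr_le_sin_of_cos.
Qed.

End PrincipalAngles.

Theorem corollaryC4 (R : rcfType) (n r : nat)
    (U V : 'M[R]_(n, r))
    (hU : orthonormal_cols U) (hV : orthonormal_cols V)
    (s : 'rV[R]_r) (P Q : 'M[R]_r)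
    (hP : orth_mx P) (hQ : orth_mx Q)
    (hs : forall j, 0 <= s 0 j)
    (hsvd : U^T *m V = P *m diag_mx s *m Q^T)
    (Z : 'M[R]_r) (hZ : psd Z) :
  dist_le (V *m Z *m V^T) (conj_psd_cone U)
    (Num.sqrt 2 * frob Z * norm2 (sinGamma s)).
Proof.
set X := V *m Z *m V^T; set Pi := U *m U^T.
have sym_Z : Z^T = Z by case: hZ.
have sym_X : X^T = X by rewrite /X !trmx_mul trmxK sym_Z mulmxA.
have sym_Pi : Pi^T = Pi by rewrite /Pi trmx_mul trmxK.
have idem_Pi : Pi *m Pi = Pi by rewrite /Pi mulmxA -(mulmxA U) hU mulmx1.
apply: (@dist_le_of_mem _ _ _ (Pi *m X *m Pi)).
  exists (U^T *m X *m U); split; last by rewrite /Pi !mulmxA.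
  have -> : U^T *m X *m U = (V^T *m U)^T *m Z *m (V^T *m U).
    by rewrite /X trmx_mul trmxK !mulmxA.
  exact: psd_conjmx.
set S := \sum_j sin_of_cos (s 0 j) ^+ 2.
have S_ge0 : 0 <= S by apply: sumr_ge0 => j _; apply: sqr_ge0.
have -> : norm2 (sinGamma s) = Num.sqrt S.
  by rewrite /norm2; congr Num.sqrt; apply: eq_bigr => j _; rewrite mxE.
have trZ_ge0 := mxtrace_mul_trmx_ge0 Z.
rewrite !frobE -sqrtrM ?ler0n // -sqrtrM ?mulr_ge0 ?ler0n // ler_sqrt;
  last by rewrite !mulr_ge0 ?ler0n.
apply: le_trans (mxtrace_sub_compress_le sym_X sym_Pi idem_Pi) _.
by rewrite -mulrA ler_pM2l ?ltr0n // (mxtrace_residual_le hV hP hQ hsvd sym_Z).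
Qed.
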